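(* Assume (V1), (V2), and (In). Then for every $n\in\mathbb{N}$ and all $s,t\ge0$, $$d_{L,1}(\hat\rho^n(t),\hat\rho^n(s))\le 2L\max\{|v_{\max}|,|v(R)|,v_{\max}-v(R)\}\,|t-s|.$$
   Context: (V1): $v\in C^1([0,\infty))$ strictly decreasing; (V2): $v(0)=v_{\max}\in\mathbb{R}$. $\mathcal{M}_L$: nonnegative compactly supported Radon measures on $\mathbb{R}$ of mass $L>0$. (In): $\bar\rho\in\mathcal{M}_L\cap L^\infty(\mathbb{R})$; $R:=\|\bar\rho\|_{L^\infty}$; $\bar x_{\min}:=\min\mathrm{supp}\,\bar\rho$. For $n\in\mathbb{N}$: $N_n=2^n$, $\ell_n=2^{-n}L$, $\bar x^n_0=\bar x_{\min}$, $\bar x^n_i=\sup\{x:\int_{\bar x^n_{i-1}}^x\bar\rho<\ell_n\}$; $(x^n_i(t))$ solves $\dot x^n_{N_n}=v_{\max}$, $\dot x^n_i=v(\ell_n/(x^n_{i+1}-x^n_i))$, $x^n_i(0)=\bar x^n_i$; $y^n_i:=\ell_n/(x^n_{i+1}-x^n_i)$; $\hat\rho^n(t,x):=\sum_{i=0}^{N_n-1}y^n_i(t)\chi_{[x^n_i(t),x^n_{i+1}(t))}(x)$. For $\mu\in\mathcal{M}_L$, $F_\mu(x):=\mu((-\infty,x])$ and $d_{L,1}(\mu,\nu):=\|F_\mu-F_\nu\|_{L^1(\mathbb{R})}$, which equals the $L^1([0,L])$ distance of the pseudo-inverses $z\mapsto\inf\{x:F_\mu(x)>z\}$. *)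

From Stdlib Require Import Reals Lra.
Open Scope R_scope.

Fixpoint rsum (f : nat -> R) (k : nat) : R :=
  match k with O => 0 | S k' => rsum f k' + f k' end.

Definition C1_on_nonneg (v : R -> R) : Prop :=
  exists v' : R -> R,
    (forall x, 0 <= x -> forall eps, 0 < eps -> exists delta, 0 < delta /\
       forall h, h <> 0 -> 0 <= x + h -> Rabs h < delta ->
         Rabs ((v (x + h) - v x) / h - v' x) < eps) /\
    (forall x, 0 <= x -> forall eps, 0 < eps -> exists delta, 0 < delta /\
       forall y, 0 <= y -> Rabs (y - x) < delta -> Rabs (v' y - v' x) < eps).

Definition strictly_decreasing_nonneg (v : R -> R) : Prop :=
  forall a b, 0 <= a -> a < b -> v b < v a.

(* F is the cumulative distribution function F(x) = rho((-oo,x]) of a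
   nonnegative compactly supported measure of mass L with density in
   L^oo, and Rinf = ||rho||_{L^oo}.  Such F are exactly the nondecreasing
   Lipschitz functions vanishing near -oo and equal to L near +oo; the
   L^oo norm of the density equals the least Lipschitz constant of F. *)
Definition lipschitz_with (F : R -> R) (K : R) : Prop :=
  forall a b, a <= b -> F b - F a <= K * (b - a).

Definition initial_datum (F : R -> R) (L Rinf : R) : Prop :=
  0 < L /\
  (forall a b, a <= b -> F a <= F b) /\
  (exists a b, (forall z, z < a -> F z = 0) /\ (forall z, b <= z -> F z = L)) /\
  lipschitz_with F Rinf /\
  (forall K, lipschitz_with F K -> Rinf <= K).

Definition in_supp (F : R -> R) (z : R) : Prop :=
  forall eps, 0 < eps -> F (z - eps) < F (z + eps).

Definition is_min_supp (F : R -> R) (m : R) : Prop :=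
  in_supp F m /\ forall z, in_supp F z -> m <= z.

Definition N_n (n : nat) : nat := (2 ^ n)%nat.
Definition ell (L : R) (n : nat) : R := L / 2 ^ n.

Definition initial_positions (F : R -> R) (L : R) (n : nat) (xbar : nat -> R)
  : Prop :=
  is_min_supp F (xbar O) /\
  forall i, (i < N_n n)%nat ->
    is_lub (fun z => F z - F (xbar i) < ell L n) (xbar (S i)).

Definition y_n (L : R) (n : nat) (x : nat -> R -> R) (i : nat) (t : R) : R :=
  ell L n / (x (S i) t - x i t).

(* (x_0,...,x_{N_n}) solves the follow-the-leader system on [0,oo)
   with initial data xbar (continuous at t = 0 from the right,
   differentiable for t > 0, particles ordered so that the right-hand
   side is defined). *)
Definition FTL_solution (v : R -> R) (L : R) (n : nat) (xbar : nat -> R)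
  (x : nat -> R -> R) : Prop :=
  (forall i, (i <= N_n n)%nat -> x i 0 = xbar i) /\
  (forall i, (i <= N_n n)%nat -> forall eps, 0 < eps -> exists delta,
      0 < delta /\ forall t, 0 <= t -> t < delta -> Rabs (x i t - x i 0) < eps) /\
  (forall t, 0 < t -> derivable_pt_lim (x (N_n n)) t (v 0)) /\
  (forall i t, (i < N_n n)%nat -> 0 < t ->
      derivable_pt_lim (x i) t (v (y_n L n x i t))) /\
  (forall i t, (i < N_n n)%nat -> 0 <= t -> x i t < x (S i) t).

Definition rho_hat (L : R) (n : nat) (x : nat -> R -> R) (t z : R) : R :=
  rsum (fun i => y_n L n x i t *
          (if Rle_dec (x i t) z then if Rlt_dec z (x (S i) t) then 1 else 0
           else 0)) (N_n n).

(* its distribution function F_{hat rho^n(t)}(z) = int_{-oo}^z hat rho^n(t),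
   written out: int_{-oo}^z y chi_[a,b) = y * max(0, min(z,b) - a). *)
Definition F_rho_hat (L : R) (n : nat) (x : nat -> R -> R) (t z : R) : R :=
  rsum (fun i => y_n L n x i t * Rmax 0 (Rmin z (x (S i) t) - x i t)) (N_n n).

(* d_{L,1}(mu,nu) = || F_mu - F_nu ||_{L^1(R)} <= C, expressed with Riemann
   integrals over all compact intervals (the integrand is nonnegative). *)
Definition dL1_le (Fmu Fnu : R -> R) (C : R) : Prop :=
  forall a b, a <= b ->
    exists pr : Riemann_integrable (fun z => Rabs (Fmu z - Fnu z)) a b,
      RiemannInt pr <= C.

From Stdlib Require Import Reals Lra Lia Classical.
From Coquelicot Require Import Coquelicot.
Open Scope R_scope.

(* The distribution function of [hat rho^n(t)] is nondecreasing,
   continuous, valued in [[0, L]], and monotone in the particle positions, so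
   displacing every particle by at most [D] keeps it between its own shifts by
   [-D] and [+D]; integrating [F (z + D) - F (z - D)] gives the bound [2 D L].
   Between times [s] and [t] each particle moves by at most
   [max (|v_max|, |v R|) |t - s|], because its speed [v (y_i)] lies in
   [[v R, v_max]] by the discrete maximum principle [0 < y_i(t) <= R]. *)

Definition uniform_cdf (l a b z : R) : R := l / (b - a) * Rmax 0 (Rmin z b - a).

Lemma uniform_cdf_bounds l a b z : 0 < l -> a < b -> 0 <= uniform_cdf l a b z <= l.
Proof.
  intros Hl Hab. unfold uniform_cdf.
  assert (Hq : l / (b - a) * (b - a) = l) by (field; lra).
  assert (Hq0 : 0 < l / (b - a)) by (apply Rdiv_lt_0_compat; lra).
  set (q := l / (b - a)) in *.
  unfold Rmax, Rmin; repeat destruct Rle_dec; nra.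
Qed.

Lemma uniform_cdf_antitone l a b a' b' z : 0 < l -> a < b -> a' < b' ->
  a <= a' -> b <= b' -> uniform_cdf l a' b' z <= uniform_cdf l a b z.
Proof.
  intros Hl Hab Hab' Ha Hb. unfold uniform_cdf.
  assert (Hq : l / (b - a) * (b - a) = l) by (field; lra).
  assert (Hq0 : 0 < l / (b - a)) by (apply Rdiv_lt_0_compat; lra).
  assert (Hq' : l / (b' - a') * (b' - a') = l) by (field; lra).
  assert (Hq0' : 0 < l / (b' - a')) by (apply Rdiv_lt_0_compat; lra).
  set (q := l / (b - a)) in *. set (q' := l / (b' - a')) in *.
  unfold Rmax, Rmin; repeat destruct Rle_dec; try nra.
  (* remaining case [a' <= z <= b]: compare the two slopes *)
  apply Rmult_le_reg_r with ((b - a) * (b' - a')); [nra|].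
  replace (q' * (z - a') * ((b - a) * (b' - a'))) with (l * ((z - a') * (b - a)))
    by (rewrite <- Hq'; ring).
  replace (q * (z - a) * ((b - a) * (b' - a'))) with (l * ((z - a) * (b' - a')))
    by (rewrite <- Hq; ring).
  apply Rmult_le_compat_l; [lra|].
  assert ((z - a') * (b - z) <= (z - a) * (b' - z)) by (apply Rmult_le_compat; lra).
  nra.
Qed.

Lemma uniform_cdf_shift l a b D z :
  uniform_cdf l (a + D) (b + D) z = uniform_cdf l a b (z - D).
Proof.
  unfold uniform_cdf. replace (b + D - (a + D)) with (b - a) by ring. f_equal.
  unfold Rmax, Rmin; repeat destruct Rle_dec; lra.
Qed.

Lemma uniform_cdf_lipschitz l a b z w : 0 < l -> a < b ->
  Rabs (uniform_cdf l a b z - uniform_cdf l a b w) <= l / (b - a) * Rabs (z - w).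
Proof.
  intros Hl Hab. unfold uniform_cdf.
  assert (Hq0 : 0 < l / (b - a)) by (apply Rdiv_lt_0_compat; lra).
  rewrite <- Rmult_minus_distr_l, Rabs_mult, (Rabs_right (l / (b - a))) by lra.
  apply Rmult_le_compat_l; [lra|].
  unfold Rmax, Rmin; repeat destruct Rle_dec; unfold Rabs; repeat destruct Rcase_abs; lra.
Qed.

Lemma rsum_le f g k : (forall i, (i < k)%nat -> f i <= g i) -> rsum f k <= rsum g k.
Proof.
  induction k as [|k IH]; simpl; intros H; [lra|].
  apply Rplus_le_compat; [apply IH; intros; apply H|apply H]; lia.
Qed.

Lemma rsum_const c k : rsum (fun _ => c) k = INR k * c.
Proof. induction k as [|k IH]; [simpl; ring|]. rewrite S_INR; cbn [rsum]; rewrite IH; ring. Qed.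

Lemma rsum_mulr f c k : rsum (fun i => f i * c) k = rsum f k * c.
Proof. induction k as [|k IH]; simpl; [ring|]. rewrite IH; ring. Qed.

Lemma rsum_abs_sub_le f g k :
  Rabs (rsum f k - rsum g k) <= rsum (fun i => Rabs (f i - g i)) k.
Proof.
  induction k as [|k IH]; simpl; [rewrite Rminus_0_r, Rabs_R0; lra|].
  replace (rsum f k + f k - (rsum g k + g k))
    with ((rsum f k - rsum g k) + (f k - g k)) by ring.
  eapply Rle_trans; [apply Rabs_triang | lra].
Qed.

(* The distribution function of the density putting mass [l] uniformly on each
   cell [[p i, p (S i))], i < N; [F_rho_hat L n x t] is this function for the
   particles [x _ t], by conversion. *)
Definition particle_cdf (l : R) (N : nat) (p : nat -> R) (z : R) : R :=
  rsum (fun i => uniform_cdf l (p i) (p (S i)) z) N.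

Definition increasing_upto (N : nat) (p : nat -> R) : Prop :=
  forall i, (i < N)%nat -> p i < p (S i).

Section ParticleCdf.

Variables (l : R) (N : nat).
Hypothesis l_pos : 0 < l.

Lemma particle_cdf_bounds p z : increasing_upto N p ->
  0 <= particle_cdf l N p z <= INR N * l.
Proof.
  intros Hp. unfold particle_cdf. rewrite <- rsum_const. split.
  - replace 0 with (rsum (fun _ => 0) N) by (rewrite rsum_const; ring).
    apply rsum_le; intros; apply uniform_cdf_bounds; auto.
  - apply rsum_le; intros; apply uniform_cdf_bounds; auto.
Qed.

Lemma particle_cdf_lipschitz p z w : increasing_upto N p ->
  Rabs (particle_cdf l N p z - particle_cdf l N p w)
    <= rsum (fun i => l / (p (S i) - p i)) N * Rabs (z - w).
Proof.
  intros Hp. unfold particle_cdf. eapply Rle_trans; [apply rsum_abs_sub_le|].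
  rewrite <- rsum_mulr. apply rsum_le; intros; apply uniform_cdf_lipschitz; auto.
Qed.

Lemma particle_cdf_displaced p q D z :
  increasing_upto N p -> increasing_upto N q ->
  (forall i, (i <= N)%nat -> Rabs (q i - p i) <= D) ->
  particle_cdf l N p (z - D) <= particle_cdf l N q z <= particle_cdf l N p (z + D).
Proof.
  intros Hp Hq HD. unfold particle_cdf. split; apply rsum_le; intros i Hi;
    pose proof (proj1 (Rabs_le_between _ _) (HD i ltac:(lia)));
    pose proof (proj1 (Rabs_le_between _ _) (HD (S i) ltac:(lia)));
    pose proof (Hp i Hi); pose proof (Hq i Hi).
  - rewrite <- uniform_cdf_shift. apply uniform_cdf_antitone; auto; lra.
  - replace (z + D) with (z - - D) by ring. rewrite <- uniform_cdf_shift.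
    apply uniform_cdf_antitone; auto; lra.
Qed.

Lemma particle_cdf_abs_sub_le p q D z :
  increasing_upto N p -> increasing_upto N q ->
  (forall i, (i <= N)%nat -> Rabs (q i - p i) <= D) ->
  Rabs (particle_cdf l N p z - particle_cdf l N q z)
    <= particle_cdf l N p (z + D) - particle_cdf l N p (z - D).
Proof.
  intros Hp Hq HD.
  destruct (particle_cdf_displaced p q D z Hp Hq HD).
  assert (Hpp : forall i, (i <= N)%nat -> Rabs (p i - p i) <= D).
  { intros i Hi. rewrite Rminus_eq_0, Rabs_R0. specialize (HD i Hi).
    pose proof (Rabs_pos (q i - p i)); lra. }
  destruct (particle_cdf_displaced p p D z Hp Hp Hpp).
  apply Rabs_le; lra.
Qed.

End ParticleCdf.

Lemma lipschitz_continuity_pt (f : R -> R) (x0 K : R) :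
  (forall u, Rabs (f u - f x0) <= K * Rabs (u - x0)) -> continuity_pt f x0.
Proof.
  intros H eps Heps. simpl. unfold R_dist.
  assert (HK : 0 <= Rabs K) by apply Rabs_pos.
  exists (eps / (Rabs K + 1)). split; [apply Rdiv_lt_0_compat; lra|].
  intros u [_ Hu].
  assert (eps / (Rabs K + 1) * (Rabs K + 1) = eps) by (field; lra).
  pose proof (H u). pose proof (Rle_abs K). pose proof (Rabs_pos (u - x0)).
  nra.
Qed.

Lemma particle_cdf_continuous l N p z : 0 < l -> increasing_upto N p ->
  continuity_pt (particle_cdf l N p) z.
Proof.
  intros Hl Hp. apply (lipschitz_continuity_pt _ _ (rsum (fun i => l / (p (S i) - p i)) N)).
  intros u. apply particle_cdf_lipschitz; auto.
Qed.

Lemma ex_RInt_continuity_pt (f : R -> R) a b :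
  (forall z, continuity_pt f z) -> ex_RInt f a b.
Proof.
  intros H. apply (ex_RInt_continuous (V := R_CompleteNormedModule)).
  intros z _. apply continuity_pt_filterlim, H.
Qed.

Lemma RInt_shift (G : R -> R) (D a b : R) : (forall z, continuity_pt G z) ->
  RInt (fun z => G (z + D)) a b = RInt G (a + D) (b + D).
Proof.
  intros H.
  assert (E := RInt_comp_lin (V := R_CompleteNormedModule) G 1 D a b
                 (ex_RInt_continuity_pt _ _ _ H)).
  rewrite !Rmult_1_l in E. rewrite <- E. apply RInt_ext. intros z _.
  unfold scal; simpl; unfold mult; simpl. rewrite !Rmult_1_l; reflexivity.
Qed.

Lemma continuity_pt_shift (G : R -> R) (D z : R) : (forall z, continuity_pt G z) ->
  continuity_pt (fun u => G (u + D)) z.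
Proof.
  intros H. apply (continuity_pt_comp (fun u => u + D) G).
  - apply (lipschitz_continuity_pt _ _ 1). intros u.
    replace (u + D - (z + D)) with (u - z) by ring. lra.
  - apply H.
Qed.

(* Integrating [G (z + D) - G (z - D)] over [[a, b]] leaves only the two
   windows [[b - D, b + D]] (counted positively) and [[a - D, a + D]]
   (counted negatively), each of width [2 D]. *)
Lemma dL1_le_of_shift_increment (G F1 F2 : R -> R) (M D : R) :
  (forall z, continuity_pt G z) -> (forall z, continuity_pt F1 z) ->
  (forall z, continuity_pt F2 z) ->
  (forall z, 0 <= G z <= M) -> 0 <= D ->
  (forall z, Rabs (F1 z - F2 z) <= G (z + D) - G (z - D)) ->
  dL1_le F1 F2 (2 * D * M).
Proof.
  intros HG HF1 HF2 HGb HD Hle a b Hab.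
  assert (HH : forall z, continuity_pt (fun u => Rabs (F1 u - F2 u)) z).
  { intros z. apply (continuity_pt_comp (fun u => F1 u - F2 u) Rabs).
    - apply continuity_pt_minus; auto.
    - apply Rcontinuity_abs. }
  exists (@continuity_implies_RiemannInt _ a b Hab (fun z _ => HH z)).
  rewrite <- RInt_Reals.
  assert (HGp := fun z => continuity_pt_shift G D z HG).
  assert (HGm := fun z => continuity_pt_shift G (- D) z HG).
  assert (HexG := fun a b => ex_RInt_continuity_pt G a b HG).
  apply Rle_trans with (RInt (fun z => G (z + D) - G (z + - D)) a b).
  { apply RInt_le; [exact Hab | apply ex_RInt_continuity_pt, HH | |].
    - apply ex_RInt_continuity_pt. intros z. apply continuity_pt_minus; auto.
    - intros z _. rewrite <- Rminus_def. apply Hle. }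
  rewrite (RInt_minus (fun z => G (z + D)) (fun z => G (z + - D)))
    by (apply ex_RInt_continuity_pt; auto).
  rewrite !RInt_shift by auto.
  assert (C1 := RInt_Chasles G (a + - D) (b + - D) (b + D) (HexG _ _) (HexG _ _)).
  assert (C2 := RInt_Chasles G (a + - D) (a + D) (b + D) (HexG _ _) (HexG _ _)).
  change (minus ?x ?y) with (x - y).
  change (plus ?x ?y) with (x + y) in C1, C2.
  assert (Ub : RInt G (b + - D) (b + D) <= 2 * D * M).
  { eapply Rle_trans; [apply Rle_abs|].
    eapply Rle_trans; [apply abs_RInt_le_const with (M := M)|].
    - lra.
    - apply HexG.
    - intros u _. specialize (HGb u). rewrite Rabs_right; lra.
    - lra. }
  assert (Lb : 0 <= RInt G (a + - D) (a + D)).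
  { apply RInt_ge_0; [lra | apply HexG | intros u _; apply HGb]. }
  lra.
Qed.

Lemma dL1_le_particle_cdf l N p q D : 0 < l ->
  increasing_upto N p -> increasing_upto N q -> 0 <= D ->
  (forall i, (i <= N)%nat -> Rabs (q i - p i) <= D) ->
  dL1_le (particle_cdf l N p) (particle_cdf l N q) (2 * D * (INR N * l)).
Proof.
  intros Hl Hp Hq HD HPQ.
  apply (dL1_le_of_shift_increment (particle_cdf l N p)); auto.
  - intros; apply particle_cdf_continuous; auto.
  - intros; apply particle_cdf_continuous; auto.
  - intros; apply particle_cdf_continuous; auto.
  - intros; apply particle_cdf_bounds; auto.
  - intros; apply particle_cdf_abs_sub_le; auto.
Qed.

Lemma ell_pos L n : 0 < L -> 0 < ell L n.
Proof. intros; unfold ell. apply Rdiv_lt_0_compat; auto. apply pow_lt; lra. Qed.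

Lemma N_n_mul_ell L n : INR (N_n n) * ell L n = L.
Proof.
  unfold N_n, ell. rewrite pow_INR. simpl (INR 2). replace (1 + 1) with 2 by ring.
  field. apply pow_nonzero; lra.
Qed.

Lemma strictly_decreasing_nonneg_le v a b : strictly_decreasing_nonneg v ->
  0 <= a -> a <= b -> v b <= v a.
Proof.
  intros Hv Ha Hab. destruct (Req_dec a b) as [-> | Hne]; [lra|].
  left; apply Hv; lra.
Qed.

Lemma continuity_pt_nbhd (f : R -> R) u0 eps : continuity_pt f u0 -> 0 < eps ->
  exists d, 0 < d /\ forall w, Rabs (w - u0) < d -> Rabs (f w - f u0) < eps.
Proof.
  intros Hc He. destruct (Hc eps He) as [d [Hd Hw]]. exists d; split; auto.
  intros w Hwd. destruct (Req_dec w u0) as [-> | Hne].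
  - rewrite Rminus_eq_0, Rabs_R0; auto.
  - apply (Hw w). repeat split; auto.
Qed.

Lemma continuity_pt_nonpos_of_left (f : R -> R) s : continuity_pt f s -> 0 < s ->
  (forall w, 0 <= w < s -> f w < 0) -> f s <= 0.
Proof.
  intros Hc Hs Hleft. apply Rnot_lt_le; intro Hpos.
  destruct (continuity_pt_nbhd f s (f s) Hc Hpos) as [d [Hd Hw]].
  set (w := s - Rmin d s / 2).
  assert (0 < Rmin d s) by (apply Rmin_glb_lt; lra).
  pose proof (Rmin_l d s). pose proof (Rmin_r d s).
  specialize (Hw w ltac:(unfold w; rewrite Rabs_left; lra)).
  specialize (Hleft w ltac:(unfold w; lra)).
  apply Rabs_lt_between in Hw. lra.
Qed.

Lemma neg_family_nbhd (g : nat -> R -> R) N u0 :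
  (forall j, (j < N)%nat -> continuity_pt (g j) u0) ->
  (forall j, (j < N)%nat -> g j u0 < 0) ->
  exists d, 0 < d /\ forall w, Rabs (w - u0) < d -> forall j, (j < N)%nat -> g j w < 0.
Proof.
  induction N as [|N IH]; intros Hc Hneg.
  - exists 1; split; [lra | intros; lia].
  - destruct IH as [d1 [Hd1 H1]]; [intros; apply Hc; lia | intros; apply Hneg; lia|].
    assert (HN := Hneg N ltac:(lia)).
    destruct (continuity_pt_nbhd (g N) u0 (- g N u0) (Hc N ltac:(lia)) ltac:(lra))
      as [d2 [Hd2 H2]].
    exists (Rmin d1 d2). split; [apply Rmin_glb_lt; auto|].
    intros w Hw j Hj. pose proof (Rmin_l d1 d2). pose proof (Rmin_r d1 d2).
    destruct (Nat.lt_ge_cases j N) as [Hlt | Hge].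
    + apply H1; auto; lra.
    + replace j with N by lia.
      specialize (H2 w ltac:(lra)). apply Rabs_lt_between in H2. lra.
Qed.

(* [s] is the supremum of the times up to which all [g j] stay negative. *)
Lemma first_crossing (g : nat -> R -> R) N T i :
  (forall j c, (j < N)%nat -> 0 <= c -> continuity_pt (g j) c) ->
  (forall j, (j < N)%nat -> g j 0 < 0) ->
  0 <= T -> (i < N)%nat -> 0 <= g i T ->
  exists s k, 0 < s /\ (k < N)%nat /\ g k s = 0 /\
    (forall j, (j < N)%nat -> g j s <= 0) /\ (forall w, 0 <= w < s -> g k w < 0).
Proof.
  intros Hc H0 HT Hi HgT.
  set (neg := fun u => forall j, (j < N)%nat -> g j u < 0).
  set (E := fun u => 0 <= u <= T /\ forall w, 0 <= w <= u -> neg w).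
  assert (E0 : E 0).
  { split; [lra|]. intros w Hw j Hj. replace w with 0 by lra. auto. }
  destruct (completeness E) as [s [Hub Hlub]].
  { exists T. intros u [Hu _]. lra. }
  { exists 0. exact E0. }
  assert (Hs0 : 0 <= s) by (apply Hub, E0).
  assert (HsT : s <= T) by (apply Hlub; intros u [Hu _]; lra).
  assert (Hbelow : forall w, 0 <= w < s -> neg w).
  { intros w Hw. apply NNPP; intro Hn.
    assert (s <= w); [|lra].
    apply Hlub. intros u [Hu1 Hu2]. apply Rnot_lt_le; intro Hwu.
    apply Hn, Hu2; lra. }
  assert (Hns : ~ neg s).
  { intro Hs. destruct (neg_family_nbhd g N s (fun j Hj => Hc j s Hj Hs0) Hs)
      as [d [Hd Hw]].
    destruct (Req_dec s T) as [-> | Hne].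
    - specialize (Hs i Hi). lra.
    - pose proof (Rmin_l (s + d / 2) T). pose proof (Rmin_r (s + d / 2) T).
      set (w := Rmin (s + d / 2) T) in *.
      assert (s < T) by (destruct HsT; [auto | contradiction]).
      assert (s < w) by (unfold w, Rmin; destruct Rle_dec; lra).
      assert (Ew : E w).
      { split; [lra|]. intros u Hu. destruct (Rlt_or_le u s).
        - apply Hbelow; lra.
        - intros j Hj. apply Hw; auto. rewrite Rabs_right; lra. }
      pose proof (Hub w Ew). lra. }
  assert (Hspos : 0 < s).
  { destruct (Req_dec s 0) as [Hz | Hz]; [|lra].
    exfalso; apply Hns; rewrite Hz; exact H0. }
  assert (Hle : forall j, (j < N)%nat -> g j s <= 0).
  { intros j Hj. apply continuity_pt_nonpos_of_left; auto.
    intros w Hw. apply Hbelow; auto. }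
  apply not_all_ex_not in Hns as [k Hk].
  apply imply_to_and in Hk as [Hk Hgk].
  exists s, k. repeat split; auto.
  - apply Rle_antisym; [apply Hle; auto | apply Rnot_lt_le; auto].
  - intros w Hw. apply Hbelow; auto.
Qed.

Lemma derivable_pt_lim_nonneg_of_left_le (h : R -> R) s r d :
  derivable_pt_lim h s d -> 0 < r ->
  (forall w, s - r < w < s -> h w <= h s) -> 0 <= d.
Proof.
  intros Hd Hr Hle. apply Rnot_lt_le; intro Hneg.
  destruct (Hd (- d) ltac:(lra)) as [[e He] Hdd]; simpl in Hdd.
  set (k := - Rmin e r / 2).
  assert (0 < Rmin e r) by (apply Rmin_glb_lt; lra).
  pose proof (Rmin_l e r). pose proof (Rmin_r e r).
  specialize (Hdd k ltac:(unfold k; lra) ltac:(unfold k; rewrite Rabs_left; lra)).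
  specialize (Hle (s + k) ltac:(unfold k; lra)).
  assert (0 <= (h (s + k) - h s) / k).
  { replace ((h (s + k) - h s) / k) with ((h s - h (s + k)) / - k)
      by (field; unfold k; lra).
    apply Rdiv_le_0_compat; [lra | unfold k; lra]. }
  apply Rabs_lt_between in Hdd. lra.
Qed.

Lemma lipschitz_of_derivative_bound (f df : R -> R) s t M : 0 <= s -> 0 <= t ->
  (forall c, 0 < c -> derivable_pt_lim f c (df c)) ->
  (forall c, 0 <= c -> continuity_pt (fun u => f (Rmax 0 u)) c) ->
  (forall c, 0 <= c -> Rabs (df c) <= M) ->
  Rabs (f t - f s) <= M * Rabs (t - s).
Proof.
  intros Hs Ht Hd Hc HM.
  pose proof (Rmin_glb s t 0 Hs Ht).
  destruct (MVT_gen (fun u => f (Rmax 0 u)) s t df) as [c [Hcr Heq]].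
  - intros c Hcr. assert (Hcpos : 0 < c) by lra.
    apply (is_derive_ext_loc f); [|apply is_derive_Reals, Hd; auto].
    exists (mkposreal c Hcpos). intros u Hu. simpl in Hu.
    apply Rabs_lt_between' in Hu. rewrite Rmax_right; [reflexivity | lra].
  - intros c Hcr. apply Hc. lra.
  - simpl in Heq. rewrite (Rmax_right 0 t), (Rmax_right 0 s) in Heq by lra.
    rewrite Heq, Rabs_mult. apply Rmult_le_compat_r; [apply Rabs_pos|].
    apply HM. lra.
Qed.

Lemma dL1_le_weaken (F1 F2 : R -> R) C C' : dL1_le F1 F2 C -> C <= C' -> dL1_le F1 F2 C'.
Proof.
  intros H HC a b Hab. destruct (H a b Hab) as [pr Hpr]. exists pr. lra.
Qed.

Lemma initial_datum_Rinf_nonneg F L Rinf : initial_datum F L Rinf -> 0 <= Rinf.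
Proof.
  intros [_ [Hmon [_ [Hlip _]]]].
  pose proof (Hmon 0 1 ltac:(lra)). pose proof (Hlip 0 1 ltac:(lra)). lra.
Qed.

Definition FTL_speed (v : R -> R) (L : R) (n : nat) (x : nat -> R -> R) (i : nat)
  (t : R) : R :=
  if Nat.ltb i (N_n n) then v (y_n L n x i t) else v 0.

Section FollowTheLeader.

Variables (v F : R -> R) (L Rinf : R) (n : nat) (xbar : nat -> R) (x : nat -> R -> R).
Hypothesis v_decr : strictly_decreasing_nonneg v.
Hypothesis HIn : initial_datum F L Rinf.
Hypothesis Hip : initial_positions F L n xbar.
Hypothesis HF : FTL_solution v L n xbar x.

Lemma FTL_gap_pos i t : (i < N_n n)%nat -> 0 <= t -> 0 < x (S i) t - x i t.
Proof. intros Hi Ht. destruct HF as [_ [_ [_ [_ Hord]]]]. specialize (Hord i t Hi Ht). lra. Qed.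

Lemma y_n_pos i t : (i < N_n n)%nat -> 0 <= t -> 0 < y_n L n x i t.
Proof.
  intros Hi Ht. apply Rdiv_lt_0_compat.
  - apply ell_pos, (proj1 HIn).
  - apply FTL_gap_pos; auto.
Qed.

Lemma FTL_derivable i t : (i <= N_n n)%nat -> 0 < t ->
  derivable_pt_lim (x i) t (FTL_speed v L n x i t).
Proof.
  intros Hi Ht. destruct HF as [_ [_ [HN [Hd _]]]]. unfold FTL_speed.
  destruct (Nat.ltb_spec i (N_n n)) as [Hlt | Hge].
  - apply Hd; auto.
  - replace i with (N_n n) by lia. apply HN; auto.
Qed.

Lemma FTL_speed_bounds i t Y : (i <= N_n n)%nat -> 0 <= t -> 0 <= Y ->
  ((i < N_n n)%nat -> y_n L n x i t <= Y) ->
  v Y <= FTL_speed v L n x i t <= v 0.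
Proof.
  intros Hi Ht HY HyY. unfold FTL_speed.
  destruct (Nat.ltb_spec i (N_n n)) as [Hlt | Hge].
  - pose proof (y_n_pos i t Hlt Ht). specialize (HyY Hlt).
    split; apply strictly_decreasing_nonneg_le; auto; lra.
  - split; [apply strictly_decreasing_nonneg_le; auto|]; lra.
Qed.

(* Trajectories are only specified on [[0, oo)]; composing with [Rmax 0]
   extends them continuously to the whole line. *)
Lemma FTL_continuity_pt i c : (i <= N_n n)%nat -> 0 <= c ->
  continuity_pt (fun u => x i (Rmax 0 u)) c.
Proof.
  intros Hi Hc. destruct (Req_dec c 0) as [-> | Hne].
  - destruct HF as [_ [Hr _]]. intros eps Heps. simpl. unfold R_dist.
    destruct (Hr i Hi eps Heps) as [d [Hd Hdd]].
    exists d; split; auto. intros u [_ Hu]. rewrite Rminus_0_r in Hu.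
    rewrite (Rmax_left 0 0) by lra. unfold Rmax; destruct Rle_dec.
    + apply Hdd; auto. pose proof (Rle_abs u). lra.
    + rewrite Rminus_eq_0, Rabs_R0; auto.
  - apply (continuity_pt_comp (fun u => Rmax 0 u) (x i)).
    + apply (lipschitz_continuity_pt _ _ 1). intros u.
      unfold Rmax; repeat destruct Rle_dec; unfold Rabs; repeat destruct Rcase_abs; lra.
    + rewrite Rmax_right by lra. apply derivable_continuous_pt.
      exists (FTL_speed v L n x i c). apply FTL_derivable; auto; lra.
Qed.

Lemma y_n_continuity_pt i c : (i < N_n n)%nat -> 0 <= c ->
  continuity_pt (fun u => y_n L n x i (Rmax 0 u)) c.
Proof.
  intros Hi Hc.
  change (fun u => y_n L n x i (Rmax 0 u)) with
    (fct_cte (ell L n) / ((fun u => x (S i) (Rmax 0 u)) - (fun u => x i (Rmax 0 u))))%F.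
  apply continuity_pt_div.
  - apply continuity_pt_const. intros a b; reflexivity.
  - apply continuity_pt_minus; apply FTL_continuity_pt; auto; lia.
  - unfold minus_fct. rewrite Rmax_right by lra.
    pose proof (FTL_gap_pos i c Hi Hc). lra.
Qed.

(* The cell [[xbar i, xbar (S i)]] carries mass at least [ell L n] and the
   density is bounded by [Rinf]. *)
Lemma y_n_initial_le i : (i < N_n n)%nat -> y_n L n x i 0 <= Rinf.
Proof.
  intros Hi. destruct HIn as [HL [_ [_ [Hlip _]]]].
  destruct Hip as [_ Hlub]. destruct HF as [H0 _].
  pose proof (FTL_gap_pos i 0 Hi (Rle_refl 0)) as Hgap.
  unfold y_n in *. rewrite (H0 i ltac:(lia)), (H0 (S i) ltac:(lia)) in *.
  pose proof (initial_datum_Rinf_nonneg F L Rinf HIn).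
  destruct (Hlub i Hi) as [Hub _].
  set (l := ell L n) in *.
  assert (Hmass : l <= F (xbar (S i)) - F (xbar i)).
  { apply Rnot_lt_le; intro Hlt.
    set (h := (l - (F (xbar (S i)) - F (xbar i))) / (Rinf + 1)).
    assert (Hh : 0 < h) by (apply Rdiv_lt_0_compat; lra).
    assert (Hhl : h * (Rinf + 1) = l - (F (xbar (S i)) - F (xbar i)))
      by (unfold h; field; lra).
    pose proof (Hlip (xbar (S i)) (xbar (S i) + h) ltac:(lra)).
    pose proof (Hub (xbar (S i) + h) ltac:(nra)). lra. }
  pose proof (Hlip (xbar i) (xbar (S i)) ltac:(lra)).
  apply Rmult_le_reg_r with (xbar (S i) - xbar i); [lra|].
  unfold Rdiv. rewrite Rmult_assoc, Rinv_l by lra. lra.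
Qed.

(* [y_i' = - ell (x_{i+1}' - x_i') / (x_{i+1} - x_i)^2], and the leader of a
   densest cell is at least as fast as the cell's tail. *)
Lemma y_n_derivative_nonpos i s : (i < N_n n)%nat -> 0 < s ->
  (forall j, (j < N_n n)%nat -> y_n L n x j s <= y_n L n x i s) ->
  exists dy, derivable_pt_lim (y_n L n x i) s dy /\ dy <= 0.
Proof.
  intros Hi Hs Hmax.
  set (yi := y_n L n x i s).
  assert (Hvi : FTL_speed v L n x i s = v yi)
    by (unfold FTL_speed; rewrite (proj2 (Nat.ltb_lt _ _) Hi); reflexivity).
  assert (HvS : v yi <= FTL_speed v L n x (S i) s).
  { apply (FTL_speed_bounds (S i) s yi); try lia; try lra.
    - left; apply y_n_pos; auto; lra.
    - apply Hmax. }
  assert (Hgap : is_derive (fun t => x (S i) t - x i t) s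
                   (FTL_speed v L n x (S i) s - v yi)).
  { rewrite <- Hvi. apply (is_derive_minus (x (S i)) (x i)); apply is_derive_Reals;
      apply FTL_derivable; auto; lia. }
  pose proof (FTL_gap_pos i s Hi ltac:(lra)).
  eexists; split.
  - apply is_derive_Reals, (is_derive_scal (fun t => / (x (S i) t - x i t))).
    apply is_derive_inv; [exact Hgap | lra].
  - set (q := / (x (S i) s - x i s) ^ 2).
    assert (0 < q) by (apply Rinv_0_lt_compat, pow_lt; lra).
    pose proof (ell_pos L n (proj1 HIn)).
    assert (0 <= (FTL_speed v L n x (S i) s - v yi) * q) by (apply Rmult_le_pos; lra).
    unfold Rdiv. fold q. nra.
Qed.

(* Maximum principle, by a barrier argument: a first time at which some
   [y_k] touches [Rinf + eps (1 + t)] would force [y_k' >= eps > 0], while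
   the touching cell is a densest one, so [y_k' <= 0]. *)
Lemma y_n_le_Rinf i T : (i < N_n n)%nat -> 0 <= T -> y_n L n x i T <= Rinf.
Proof.
  intros Hi HT. apply Rnot_lt_le; intro Hgt.
  set (eps := (y_n L n x i T - Rinf) / (2 * (1 + T))).
  assert (Heps : 0 < eps) by (apply Rdiv_lt_0_compat; lra).
  set (g := fun j u => y_n L n x j (Rmax 0 u) - (Rinf + eps * (1 + u))).
  destruct (first_crossing g (N_n n) T i) as [s [k [Hs [Hk [Hgk [Hall Hbefore]]]]]];
    unfold g in *; auto.
  - intros j c Hj Hc. apply continuity_pt_minus; [apply y_n_continuity_pt; auto|].
    apply (lipschitz_continuity_pt _ _ eps). intros u.
    replace (Rinf + eps * (1 + u) - (Rinf + eps * (1 + c))) with (eps * (u - c)) by ring.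
    rewrite Rabs_mult, (Rabs_right eps) by lra. lra.
  - intros j Hj. rewrite Rmax_left by lra. pose proof (y_n_initial_le j Hj). lra.
  - rewrite Rmax_right by lra.
    assert (eps * (1 + T) = (y_n L n x i T - Rinf) / 2) by (unfold eps; field; lra).
    lra.
  - rewrite Rmax_right in Hgk by lra.
    destruct (y_n_derivative_nonpos k s Hk Hs) as [dy [Hdy Hdy0]].
    { intros j Hj. specialize (Hall j Hj). rewrite Rmax_right in Hall by lra. lra. }
    assert (Hbar : is_derive (fun t => Rinf + eps * (1 + t)) s eps)
      by (auto_derive; [exact I | ring]).
    assert (Hh : derivable_pt_lim (fun t => y_n L n x k t - (Rinf + eps * (1 + t))) s
                   (dy - eps))
      by (apply is_derive_Reals, (is_derive_minus (y_n L n x k)); auto;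
          apply is_derive_Reals; auto).
    enough (0 <= dy - eps) by lra.
    apply (derivable_pt_lim_nonneg_of_left_le _ s s _ Hh Hs).
    intros w Hw. specialize (Hbefore w ltac:(lra)).
    rewrite Rmax_right in Hbefore by lra. lra.
Qed.

Lemma FTL_lipschitz i s t : (i <= N_n n)%nat -> 0 <= s -> 0 <= t ->
  Rabs (x i t - x i s) <= Rmax (Rabs (v 0)) (Rabs (v Rinf)) * Rabs (t - s).
Proof.
  intros Hi Hs Ht.
  apply (lipschitz_of_derivative_bound (x i) (FTL_speed v L n x i)); auto.
  - intros c Hc. apply FTL_derivable; auto.
  - intros c Hc. apply FTL_continuity_pt; auto.
  - intros c Hc.
    destruct (FTL_speed_bounds i c Rinf Hi Hc (initial_datum_Rinf_nonneg F L Rinf HIn)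
                (fun Hlt => y_n_le_Rinf i c Hlt Hc)).
    rewrite Rmax_comm. apply RmaxAbs; auto.
Qed.

End FollowTheLeader.

Theorem proposition3p13 (v : R -> R) (vmax : R) (F : R -> R) (L Rinf : R)
  (HV1 : C1_on_nonneg v) (HV1' : strictly_decreasing_nonneg v)
  (HV2 : v 0 = vmax)
  (HIn : initial_datum F L Rinf) :
  forall (n : nat) (xbar : nat -> R) (x : nat -> R -> R),
    initial_positions F L n xbar ->
    FTL_solution v L n xbar x ->
    forall s t : R, 0 <= s -> 0 <= t ->
      dL1_le (F_rho_hat L n x t) (F_rho_hat L n x s)
        (2 * L * Rmax (Rmax (Rabs vmax) (Rabs (v Rinf))) (vmax - v Rinf)
           * Rabs (t - s)).
Proof.
  intros n xbar x Hip HF s t Hs Ht.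
  set (M := Rmax (Rabs (v 0)) (Rabs (v Rinf))).
  assert (HM : 0 <= M) by (eapply Rle_trans; [apply Rabs_pos | apply Rmax_l]).
  pose proof (Rabs_pos (t - s)).
  apply dL1_le_weaken with (2 * (M * Rabs (t - s)) * (INR (N_n n) * ell L n)).
  - apply (dL1_le_particle_cdf (ell L n) (N_n n) (fun i => x i t) (fun i => x i s)).
    + apply ell_pos, (proj1 HIn).
    + intros i Hi. pose proof (FTL_gap_pos v L n xbar x HF i t Hi Ht); lra.
    + intros i Hi. pose proof (FTL_gap_pos v L n xbar x HF i s Hi Hs); lra.
    + apply Rmult_le_pos; auto.
    + intros i Hi. rewrite (Rabs_minus_sym t s).
      apply (FTL_lipschitz v F L Rinf n xbar x); auto.
  - rewrite N_n_mul_ell. subst vmax. fold M.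
    pose proof (Rmax_l M (v 0 - v Rinf)). pose proof (proj1 HIn).
    assert (0 <= (Rmax M (v 0 - v Rinf) - M) * Rabs (t - s)) by (apply Rmult_le_pos; lra).
    nra.
Qed.
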